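(* Let $n^*_1,n^*_2\ge1$, $n^*=n^*_1+n^*_2$, and let $\psi$ be a log-convex Archimedean generator with $\phi=\psi^{-1}$. Let $X_1,\dots,X_{n^*}$ be dependent nonnegative random variables sharing an Archimedean survival copula with generator $\psi$, with $X_i\sim F_1(\lambda_1x)$ for $i\le n^*_1$ and $X_j\sim F_2(\lambda_2x)$ for $j>n^*_1$; let $Y_1,\dots,Y_{n^*}$ be dependent nonnegative random variables sharing an Archimedean survival copula with generator $\psi$, with $Y_i\sim F_1(\mu_1x)$ for $i\le n^*_1$ and $Y_j\sim F_2(\mu_2x)$ for $j>n^*_1$ ($\lambda_k,\mu_k>0$). Let $X_{1:n^*}(n^*_1,n^*_2)=\min_iX_i$, $Y_{1:n^*}(n^*_1,n^*_2)=\min_iY_i$, and write $\boldsymbol\lambda^*=(\lambda_1,\dots,\lambda_1,\lambda_2,\dots,\lambda_2)$, $\boldsymbol\mu^*=(\mu_1,\dots,\mu_1,\mu_2,\dots,\mu_2)$ (with $n^*_1$ copies of the first entry and $n^*_2$ of the second). Let either (a) $n^*_1\le n^*_2$ and $\boldsymbol\lambda=(\lambda_1,\lambda_2),\boldsymbol\mu=(\mu_1,\mu_2)\in\mathcal E_+$, or (b) $n^*_1\ge n^*_2$ and $\boldsymbol\lambda,\boldsymbol\mu\in\mathcal D_+$. Then: (i) if $r_1$ or $r_2$ is increasing and $r_1(x)\le r_2(x)$ for all $x>0$ in case (a) (respectively $r_1(x)\ge r_2(x)$ for all $x>0$ in case (b)), then $\boldsymbol\lambda^*\succeq_w\boldsymbol\mu^*$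 implies $X_{1:n^*}(n^*_1,n^*_2)\le_{st}Y_{1:n^*}(n^*_1,n^*_2)$; (ii) if $r_1=r_2=r$ and $r$ is increasing, then $\boldsymbol\lambda^*\succeq_w\boldsymbol\mu^*$ implies $X_{1:n^*}(n^*_1,n^*_2)\le_{st}Y_{1:n^*}(n^*_1,n^*_2)$.
   Context: $Z\sim F(\lambda x)$ means $Z$ has distribution function $x\mapsto F(\lambda x)$. Archimedean generator: a continuous nonincreasing $\psi:[0,\infty)\to[0,1]$ with $\psi(0)=1$, $\psi(\infty)=0$, which is $m$-monotone; $\phi=\psi^{-1}$. $Z_1,\dots,Z_m$ with marginal survival functions $\bar G_i$ share an Archimedean survival copula with generator $\psi$ if $P(Z_1>z_1,\dots,Z_m>z_m)=\psi(\sum_i\phi(\bar G_i(z_i)))$. $F_1,F_2$ are absolutely continuous distribution functions on $[0,\infty)$ with densities $f_k$ and hazard rates $r_k=f_k/(1-F_k)$. $\mathcal E_+=\{(x_1,x_2):0<x_1\le x_2\}$, $\mathcal D_+=\{(x_1,x_2):x_1\ge x_2>0\}$. For $\boldsymbol a,\boldsymbol b\in\mathbb R^k$ with increasingly ordered coordinates $a_{(1)}\le\dots\le a_{(k)}$: $\boldsymbol a\succeq_w\boldsymbol b$ means $\sum_{i=l}^ka_{(i)}\ge\sum_{i=l}^kb_{(i)}$ for all $l$. $U\le_{st}V$ means $P(U>x)\le P(V>x)$ for all $x$. Increasing/decreasing are in the weak sense. *)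

From HB Require Import structures.
From mathcomp Require Import all_boot all_order all_algebra.
From mathcomp Require Import all_classical all_reals all_analysis.
Set Implicit Arguments. Unset Strict Implicit. Unset Printing Implicit Defensive.
Import Order.TTheory GRing.Theory Num.Theory.
Import numFieldNormedType.Exports.
Local Open Scope classical_set_scope.
Local Open Scope ring_scope.

Section Defs.
Variable R : realType.

Definition convex_on (I : set R) (g : R -> R) : Prop :=
  forall x y t, I x -> I y -> 0 <= t <= 1 ->
    g (t * x + (1 - t) * y) <= t * g x + (1 - t) * g y.

Definition nonincr_on (I : set R) (g : R -> R) : Prop :=
  forall x y, I x -> I y -> x <= y -> g y <= g x.

Definition m_monotone (m : nat) (psi : R -> R) : Prop :=
  [/\ (forall k, (k < m - 2)%N -> forall x, 0 < x -> derivable (derive1n k psi) x 1),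
      (forall k, (k <= m - 2)%N -> forall x, 0 < x -> 0 <= (-1) ^+ k * derive1n k psi x),
      (forall k, (k <= m - 2)%N ->
         nonincr_on `]0, +oo[ (fun x => (-1) ^+ k * derive1n k psi x)) &
      convex_on `]0, +oo[ (fun x => (-1) ^+ (m - 2) * derive1n (m - 2) psi x)].

Definition archimedean_generator (m : nat) (psi : R -> R) : Prop :=
  {within `[0, +oo[, continuous psi} /\
  [/\ nonincr_on `[0, +oo[ psi,
      (forall x, 0 <= x -> 0 <= psi x <= 1),
      psi 0 = 1,
      (psi x @[x --> +oo%R] --> (0:R)) &
      m_monotone m psi].

Definition log_convex (psi : R -> R) : Prop :=
  forall x y t, 0 <= x -> 0 <= y -> 0 <= t <= 1 ->
    psi (t * x + (1 - t) * y) <= (psi x) `^ t * (psi y) `^ (1 - t).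

(* phi = psi^{-1} on (0,1]  (phi(0) = +oo is handled in [arch_survival_copula]) *)
Definition inverse_generator (psi phi : R -> R) : Prop :=
  forall u, 0 < u <= 1 -> 0 <= phi u /\ psi (phi u) = u.

Definition ac_distribution (F f : R -> R) : Prop :=
  [/\ (forall x, x < 0 -> F x = 0),
      (forall x, 0 <= f x),
      measurable_fun setT f,
      (forall x, 0 <= x ->
         (F x)%:E = (\int[lebesgue_measure]_(t in `[0%R, x]) (f t)%:E)%E) &
      (F x @[x --> +oo%R] --> (1:R))].

Definition hazard (F f : R -> R) (x : R) : \bar R :=
  if F x < 1 then (f x / (1 - F x))%:E else +oo%E.

Definition hazard_increasing (F f : R -> R) : Prop :=
  forall x y, 0 < x -> x <= y -> (hazard F f x <= hazard F f y)%E.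

Definition Gbar (n1 : nat) (F1 F2 : R -> R) (l1 l2 : R) n (i : 'I_n) (z : R) : R :=
  if (i < n1)%N then 1 - F1 (l1 * z) else 1 - F2 (l2 * z).

(* Z_1..Z_n (on probability space P) share the Archimedean survival copula with
   generator psi (phi = psi^{-1}, phi(0) = +oo, psi(+oo) = 0), marginal
   survival functions Gb i *)
Definition arch_survival_copula d (T : measurableType d) (P : probability T R)
  n (Z : 'I_n -> T -> R) (psi phi : R -> R) (Gb : 'I_n -> R -> R) : Prop :=
  forall z : 'I_n -> R,
    P [set t | forall i, z i < Z i t] =
    if [forall i, 0 < Gb i (z i)]
    then (psi (\sum_(i < n) phi (Gb i (z i))))%:E else 0%E.

Definition model d (T : measurableType d) (P : probability T R) (n1 n2 : nat)
  (Z : 'I_(n1 + n2) -> {RV P >-> R}) (psi phi F1 F2 : R -> R) (l1 l2 : R) : Prop :=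
  [/\ (forall i, P [set t | Z i t < 0] = 0%E),
      (forall i x, P [set t | Z i t <= x] =
                   (1 - Gbar n1 F1 F2 l1 l2 i x)%:E) &
      arch_survival_copula P (fun i => (Z i : T -> R)) psi phi
                           (Gbar n1 F1 F2 l1 l2 (n:=n1 + n2))].

Definition minrv T n (Z : 'I_n -> T -> R) (t : T) : \bar R :=
  \big[Order.min/+oo%E]_(i < n) (Z i t)%:E.

Definition st_le d1 d2 (T1 : measurableType d1) (T2 : measurableType d2)
  (P1 : probability T1 R) (P2 : probability T2 R)
  (U : T1 -> \bar R) (V : T2 -> \bar R) : Prop :=
  forall x : R, (P1 [set t | x%:E < U t] <= P2 [set t | x%:E < V t])%E.

Definition weakly_supmajorizes (a b : seq R) : Prop :=
  size a = size b /\
  forall l, (l < size a)%N ->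
    \sum_(l <= i < size a) nth 0 (sort <=%R b) i <=
    \sum_(l <= i < size a) nth 0 (sort <=%R a) i.

Definition in_Eplus (x1 x2 : R) : Prop := (0 < x1) && (x1 <= x2).
Definition in_Dplus (x1 x2 : R) : Prop := (0 < x2) && (x2 <= x1).

End Defs.

Arguments model {R d T} P n1 n2 Z psi phi F1 F2 l1 l2.

From HB Require Import structures.
From mathcomp Require Import all_boot all_order all_algebra.
From mathcomp Require Import all_classical all_reals all_analysis.
From mathcomp Require Import measurable_realfun ring lra.
Import Order.TTheory GRing.Theory Num.Theory.
Import numFieldNormedType.Exports.
Local Open Scope classical_set_scope.
Local Open Scope ring_scope.

(* The survival function of the minimum is
   psi (n1 phi (1 - F1 (l1 x)) + n2 phi (1 - F2 (l2 x))) and psi is nonincreasing, so it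
   suffices to compare the arguments of psi. Weak supermajorization gives
   n1 m1 + n2 m2 <= n1 l1 + n2 l2 and max (m1, m2) <= max (l1, l2), so in case (a) the only
   nontrivial situation is l1 < m1 <= m2 <= l2. Let h be the value at m1 x of the increasing
   one of the two hazard rates: it bounds r1 from above on [l1 x, m1 x] and r2 from below on
   [m2 x, l2 x], so ln (1 - F1) decreases by at most h (m1 - l1) x on the first interval and
   ln (1 - F2) by at least h (l2 - m2) x on the second, and the constraint on the sums
   balances the two. Log-convexity of psi, i.e. increasing chord slopes of ln psi, turns this
   balance of logarithms into the required inequality between the values of phi. Since F is
   only known through its density, hazard bounds become exponential survival bounds by a
   discrete Gronwall argument on uniform grids. Case (b) is case (a) with the two groups
   exchanged, and (ii) is a special case of (i). *)

Lemma integral_itv_cst {R : realType} (z w C : R) : z <= w ->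
  (\int[lebesgue_measure]_(t in `]z, w]) C%:E = (C * (w - z))%:E)%E.
Proof.
move=> zw; rewrite integral_cst //= lebesgue_measure_itv /= lte_fin.
case: ifPn => [_|]; first by rewrite -EFinD -EFinM.
rewrite -leNgt => wz; have -> : w = z by apply/eqP; rewrite eq_le wz zw.
by rewrite subrr mulr0 mule0.
Qed.

Section AbsolutelyContinuousDistribution.
Context {R : realType} {F f : R -> R}.
Hypothesis HF : ac_distribution F f.

Lemma ac_cdf_lt0 x : x < 0 -> F x = 0.
Proof. by case: HF => + _ _ _ _; apply. Qed.

Lemma ac_density_ge0 x : 0 <= f x.
Proof. by case: HF => _ + _ _ _; apply. Qed.

Lemma ac_density_measurable (D : set R) : measurable_fun D (fun t => (f t)%:E).
Proof. by apply/measurable_EFinP; apply: measurable_funTS; case: HF. Qed.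

Lemma ac_cdf_integral x : 0 <= x ->
  (F x)%:E = (\int[lebesgue_measure]_(t in `[0%R, x]) (f t)%:E)%E.
Proof. by case: HF => _ _ _ + _; apply. Qed.

Lemma ac_cdf0 : F 0 = 0.
Proof. by have := ac_cdf_integral _ (lexx 0); rewrite set_itv1 integral_set1 => -[]. Qed.

Lemma ac_cdf_le0 x : x <= 0 -> F x = 0.
Proof. by rewrite le_eqVlt => /predU1P[->|]; [exact: ac_cdf0 | exact: ac_cdf_lt0]. Qed.

Lemma ac_cdfB z w : 0 <= z -> z <= w ->
  (F w - F z)%:E = (\int[lebesgue_measure]_(t in `]z, w]) (f t)%:E)%E.
Proof.
move=> z0 zw; have := ac_cdf_integral _ (le_trans z0 zw).
rewrite (@itv_bndbnd_setU _ _ (BLeft 0) (BRight z) (BRight w)) ?bnd_simp //.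
rewrite ge0_integral_setU //=; last 3 first.
- exact: ac_density_measurable.
- by move=> t _; rewrite lee_fin ac_density_ge0.
- apply/disj_setPS => t; rewrite /= !in_itv /= => -[/andP[_ tz] /andP[zt _]].
  by move: (lt_le_trans zt tz); rewrite ltxx.
rewrite -ac_cdf_integral //.
by case: (\int[_]_(_ in _) _)%E => [r [->]||] //; rewrite addrAC subrr add0r.
Qed.

Lemma ac_cdfB_le z w C : 0 <= z -> z <= w ->
  (forall u, z < u -> u <= w -> f u <= C) -> F w - F z <= C * (w - z).
Proof.
move=> z0 zw fC; rewrite -lee_fin ac_cdfB // -integral_itv_cst //.
apply: ge0_le_integral => //.
- by move=> t _; rewrite lee_fin ac_density_ge0.
- exact: ac_density_measurable.
- by move=> t; rewrite /= in_itv /= => /andP[zt tw]; rewrite lee_fin fC.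
Qed.

Lemma ac_cdfB_ge z w C : 0 <= z -> z <= w -> 0 <= C ->
  (forall u, z < u -> u <= w -> C <= f u) -> C * (w - z) <= F w - F z.
Proof.
move=> z0 zw C0 Cf; rewrite -lee_fin ac_cdfB // -integral_itv_cst //.
apply: ge0_le_integral => //.
- exact: ac_density_measurable.
- by move=> t; rewrite /= in_itv /= => /andP[zt tw]; rewrite lee_fin Cf.
Qed.

Lemma ac_cdf_le z w : z <= w -> F z <= F w.
Proof.
have le_nonneg a b : 0 <= a -> a <= b -> F a <= F b.
  move=> a0 ab; rewrite -subr_ge0 -(mul0r (b - a)).
  by apply: ac_cdfB_ge => // u _ _; exact: ac_density_ge0.
move=> zw; have [z0|z_lt0] := leP 0 z; first exact: le_nonneg.
rewrite ac_cdf_lt0 //; have [w0|w_lt0] := leP 0 w; last by rewrite ac_cdf_lt0.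
by rewrite -ac_cdf0; exact: le_nonneg.
Qed.

Lemma ac_cdf_ge0 x : 0 <= F x.
Proof. by have [x0|/ltW x0] := leP 0 x; [rewrite -ac_cdf0 ac_cdf_le | rewrite ac_cdf_le0]. Qed.

Lemma ac_cdf_le1 x : F x <= 1.
Proof.
have [_ _ _ _ F1] := HF; rewrite -(cvg_lim _ F1) //.
apply: limr_ge; first by apply/cvg_ex; exists 1.
by near=> y; apply: ac_cdf_le; near: y; apply: nbhs_pinfty_ge; exact: num_real.
Unshelve. all: by end_near.
Qed.

Lemma ac_survival_ge0 x : 0 <= 1 - F x.
Proof. by rewrite subr_ge0 ac_cdf_le1. Qed.

Lemma ac_survival_le1 x : 1 - F x <= 1.
Proof. by rewrite gerBl ac_cdf_ge0. Qed.

Lemma ac_survival_le {x y} : x <= y -> 1 - F y <= 1 - F x.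
Proof. by move=> xy; rewrite lerD2l lerN2 ac_cdf_le. Qed.

End AbsolutelyContinuousDistribution.

Definition grid {R : realType} (p q : R) (n k : nat) : R := p + k%:R * ((q - p) / n%:R).

Section UniformGrid.
Context {R : realType} (p q : R) (n : nat).
Hypotheses (pq : p <= q) (n_gt0 : (0 < n)%N).
Local Notation x := (grid p q n).

Lemma grid0 : x 0 = p.
Proof. by rewrite /grid mul0r addr0. Qed.

Lemma gridn : x n = q.
Proof. by rewrite /grid mulrCA divff ?mulr1 ?subrKC // pnatr_eq0 -lt0n. Qed.

Lemma gridSB k : x k.+1 - x k = (q - p) / n%:R.
Proof. by rewrite /grid -natr1; ring. Qed.

Lemma grid_leS k : x k <= x k.+1.
Proof. by rewrite -subr_ge0 gridSB divr_ge0 // subr_ge0. Qed.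

Lemma grid_ge k : p <= x k.
Proof. by rewrite /grid lerDl mulr_ge0 // divr_ge0 // subr_ge0. Qed.

Lemma grid_le k : (k <= n)%N -> x k <= q.
Proof.
move=> kn; rewrite -[leRHS]gridn /grid lerD2l ler_wpM2r ?ler_nat //.
by rewrite divr_ge0 // subr_ge0.
Qed.

End UniformGrid.

Section DiscreteGronwall.
Context {R : realType}.

Lemma ler_of_mulexpR (x y : R) : (forall e, 0 < e -> x <= y * expR e) -> x <= y.
Proof.
move=> xy; apply/ler_addgt0Pr => d d_gt0; have [y_le0|y_gt0] := leP y 0.
  by have := xy 1 ltr01; have := expR_ge1Dx (1 : R); nra.
have dy_gt1 : 1 < 1 + d / y by rewrite ltrDl divr_gt0.
have := xy _ (ln_gt0 dy_gt1).
by rewrite lnK ?posrE ?(lt_trans ltr01) // mulrDr mulr1 mulrCA divff ?gt_eqF ?mulr1.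
Qed.

Lemma expR_div1D_le (s : R) : -1 < s -> expR (s / (1 + s)) <= 1 + s.
Proof.
move=> s_gtN1; have s1_gt0 : 0 < 1 + s by rewrite -ltrBlDl sub0r.
have := expR_ge1Dx (- (s / (1 + s))).
have -> : 1 - s / (1 + s) = (1 + s)^-1 by field; rewrite gt_eqF.
by rewrite expRN lef_pV2 ?posrE ?expR_gt0.
Qed.

Lemma geometric_ge (a : nat -> R) c n : 0 <= c ->
  (forall k, (k < n)%N -> c * a k <= a k.+1) -> c ^+ n * a 0%N <= a n.
Proof.
move=> c0 step; elim: n step => [|n IHn] step; first by rewrite mul1r.
rewrite exprS -mulrA; apply: le_trans (step n _) => //.
by rewrite ler_wpM2l // IHn // => k /ltnW/step.
Qed.

Lemma geometric_le (a : nat -> R) c n : 0 <= c ->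
  (forall k, (k < n)%N -> c * a k.+1 <= a k) -> c ^+ n * a n <= a 0%N.
Proof.
move=> c0 step; elim: n step => [|n IHn] step; first by rewrite mul1r.
apply: le_trans (IHn _) => [|k /ltnW/step //].
by rewrite exprSr -mulrA ler_wpM2l ?exprn_ge0 ?step.
Qed.

Variables (u : R -> R) (p q rho : R).
Hypotheses (pq : p <= q) (rho_ge0 : 0 <= rho).

Lemma gronwall_ge : 0 <= u p ->
  (forall z w, p <= z -> z <= w -> w <= q -> u z * (1 - rho * (w - z)) <= u w) ->
  u p * expR (- (rho * (q - p))) <= u q.
Proof.
move=> up_ge0 step; set A := rho * (q - p).
have A_ge0 : 0 <= A by rewrite mulr_ge0 // subr_ge0.
apply: ler_of_mulexpR => e e_gt0.
(* [n] is large enough for [n t / (1 - t) <= A + e], where [t := rho (q - p) / n]. *)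
pose n := (Num.truncn (A + A ^+ 2 / e)).+1.
have n_gt : A + A ^+ 2 / e < n%:R := truncnS_gt _.
have n_gt0 : 0 < n%:R :> R by rewrite ltr0n.
pose D := (q - p) / n%:R; pose t := rho * D.
have nt : n%:R * t = A by rewrite /t /D /A; field; rewrite gt_eqF.
have D_ge0 : 0 <= D by rewrite divr_ge0 // subr_ge0.
have t_ge0 : 0 <= t by rewrite mulr_ge0.
have t_lt1 : t < 1.
  rewrite -(ltr_pM2l n_gt0) mulr1 nt.
  by have := divr_ge0 (sqr_ge0 A) (ltW e_gt0); lra.
have survival : (1 - t) ^+ n * u p <= u q.
  have := @geometric_ge (fun k => u (grid p q n k)) (1 - t) n.
  rewrite /= grid0 gridn //; apply; first by rewrite subr_ge0 ltW.
  move=> k kn; rewrite mulrC /t /D -(gridSB p q n k).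
  by apply: step; [exact: grid_ge | exact: grid_leS | exact: grid_le].
have exp_bound : expR (- A - e) <= (1 - t) ^+ n.
  have t_sub : n%:R * (t / (1 - t)) <= A + e.
    have eA : e * A + A ^+ 2 < e * n%:R.
      by move: n_gt; rewrite -(ltr_pM2l e_gt0) mulrDr [e * (_ / e)]mulrC divfK ?gt_eqF.
    rewrite mulrA ler_pdivrMr ?subr_gt0 //; nra.
  apply: le_trans (_ : expR (- (t / (1 - t))) ^+ n <= _).
    by rewrite -expRM_natl ler_expR; lra.
  apply: lerXn2r; [by rewrite nnegrE expR_ge0 | by rewrite nnegrE subr_ge0 ltW |].
  by have := @expR_div1D_le (- t); rewrite mulNr; apply; lra.
have -> : u p * expR (- A) = u p * expR (- A - e) * expR e by rewrite -mulrA -expRD subrK.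
by rewrite ler_wpM2r ?expR_ge0 //; apply: le_trans survival; rewrite mulrC ler_wpM2r.
Qed.

Lemma gronwall_le : 0 <= u q ->
  (forall z w, p <= z -> z <= w -> w <= q -> u w * (1 + rho * (w - z)) <= u z) ->
  u q <= u p * expR (- (rho * (q - p))).
Proof.
move=> uq_ge0 step; set A := rho * (q - p).
have A_ge0 : 0 <= A by rewrite mulr_ge0 // subr_ge0.
apply: ler_of_mulexpR => e e_gt0.
(* [n] is large enough for [A - e <= n t / (1 + t)], where [t := rho (q - p) / n]. *)
pose n := (Num.truncn (A ^+ 2 / e)).+1.
have n_gt : A ^+ 2 / e < n%:R := truncnS_gt _.
have n_gt0 : 0 < n%:R :> R by rewrite ltr0n.
pose D := (q - p) / n%:R; pose t := rho * D.
have nt : n%:R * t = A by rewrite /t /D /A; field; rewrite gt_eqF.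
have D_ge0 : 0 <= D by rewrite divr_ge0 // subr_ge0.
have t_ge0 : 0 <= t by rewrite mulr_ge0.
have survival : (1 + t) ^+ n * u q <= u p.
  have := @geometric_le (fun k => u (grid p q n k)) (1 + t) n.
  rewrite /= grid0 gridn //; apply; first by rewrite addr_ge0.
  move=> k kn; rewrite mulrC /t /D -(gridSB p q n k).
  by apply: step; [exact: grid_ge | exact: grid_leS | exact: grid_le].
have exp_bound : expR (A - e) <= (1 + t) ^+ n.
  have t_sub : A - e <= n%:R * (t / (1 + t)).
    have eA : A ^+ 2 < e * n%:R by move: n_gt; rewrite ltr_pdivrMr // mulrC.
    rewrite mulrA ler_pdivlMr ?ltr_wpDr //; nra.
  apply: le_trans (_ : expR (t / (1 + t)) ^+ n <= _).
    by rewrite -expRM_natl ler_expR.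
  apply: lerXn2r; [by rewrite nnegrE expR_ge0 | by rewrite nnegrE addr_ge0 |].
  by apply: expR_div1D_le; lra.
have -> : u p * expR (- A) * expR e = u p * expR (- (A - e)) by rewrite -mulrA -expRD opprB addrC.
rewrite -[u q]mulr1 -(expRxMexpNx_1 (A - e)) mulrA ler_wpM2r ?expR_ge0 //.
by apply: le_trans survival; rewrite mulrC ler_wpM2r.
Qed.

End DiscreteGronwall.

Section HazardRate.
Context {R : realType} {F f : R -> R}.
Hypothesis HF : ac_distribution F f.

Lemma hazard_ge0 x : (0 <= hazard F f x)%E.
Proof.
rewrite /hazard; case: ifPn => // F_lt1.
by rewrite lee_fin divr_ge0 ?(ac_density_ge0 HF) // subr_ge0 ltW.
Qed.

Lemma density_le_of_hazard {rho x} :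
  (hazard F f x <= rho%:E)%E -> f x <= rho * (1 - F x).
Proof. by rewrite /hazard; case: ifPn => // F_lt1; rewrite lee_fin ler_pdivrMr ?subr_gt0. Qed.

Lemma density_ge_of_hazard {rho x} : 0 <= rho ->
  (rho%:E <= hazard F f x)%E -> rho * (1 - F x) <= f x.
Proof.
move=> rho_ge0; rewrite /hazard; case: ifPn => [F_lt1|].
  by rewrite lee_fin ler_pdivlMr ?subr_gt0.
rewrite -leNgt => F_ge1 _; apply: le_trans (ac_density_ge0 HF x).
by rewrite mulr_ge0_le0 // subr_le0.
Qed.

Lemma survival_step_ge z w rho : 0 <= z -> z <= w -> 0 <= rho ->
  (forall u, z < u -> u <= w -> (hazard F f u <= rho%:E)%E) ->
  (1 - F z) * (1 - rho * (w - z)) <= 1 - F w.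
Proof.
move=> z_ge0 zw rho_ge0 r_le.
suff : F w - F z <= rho * (1 - F z) * (w - z) by nra.
apply: (ac_cdfB_le HF) => // u zu uw.
apply: le_trans (density_le_of_hazard (r_le u zu uw)) _.
by rewrite ler_wpM2l // (ac_survival_le HF) ?ltW.
Qed.

Lemma survival_step_le z w rho : 0 <= z -> z <= w -> 0 <= rho ->
  (forall u, z < u -> u <= w -> (rho%:E <= hazard F f u)%E) ->
  (1 - F w) * (1 + rho * (w - z)) <= 1 - F z.
Proof.
move=> z_ge0 zw rho_ge0 r_ge.
suff : rho * (1 - F w) * (w - z) <= F w - F z by nra.
apply: (ac_cdfB_ge HF) => // [|u zu uw]; first by rewrite mulr_ge0 // (ac_survival_ge0 HF).
apply: le_trans (density_ge_of_hazard rho_ge0 (r_ge u zu uw)).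
by rewrite ler_wpM2l // (ac_survival_le HF).
Qed.

Lemma survival_ge_of_hazard {p q rho} : 0 <= p -> p <= q -> 0 <= rho ->
  (forall u, p < u -> u <= q -> (hazard F f u <= rho%:E)%E) ->
  (1 - F p) * expR (- (rho * (q - p))) <= 1 - F q.
Proof.
move=> p_ge0 pq rho_ge0 r_le.
apply: (gronwall_ge (fun x => 1 - F x)) => //; first by rewrite (ac_survival_ge0 HF).
move=> z w pz zw wq; apply: survival_step_ge => // [|u zu uw]; first exact: le_trans pz.
by apply: r_le; [exact: le_lt_trans pz zu | exact: le_trans uw wq].
Qed.

Lemma survival_le_of_hazard {p q rho} : 0 <= p -> p <= q -> 0 <= rho ->
  (forall u, p < u -> u <= q -> (rho%:E <= hazard F f u)%E) ->
  1 - F q <= (1 - F p) * expR (- (rho * (q - p))).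
Proof.
move=> p_ge0 pq rho_ge0 r_ge.
apply: (gronwall_le (fun x => 1 - F x)) => //; first by rewrite (ac_survival_ge0 HF).
move=> z w pz zw wq; apply: survival_step_le => // [|u zu uw]; first exact: le_trans pz.
by apply: r_ge; [exact: le_lt_trans pz zu | exact: le_trans uw wq].
Qed.

End HazardRate.

Definition hazard_separated {R : realType} (F1 f1 F2 f2 : R -> R) (z : R) := exists h : R -> R,
  [/\ forall u, 0 < u -> u <= z -> 0 <= h u,
      forall u v, 0 < u -> u <= v -> v <= z -> (hazard F1 f1 u <= (h v)%:E)%E &
      forall u v, 0 < u -> u <= v -> u <= z -> ((h u)%:E <= hazard F2 f2 v)%E].

Section HazardComparison.
Context {R : realType} {F1 f1 F2 f2 : R -> R}.
Hypotheses (HF1 : ac_distribution F1 f1) (HF2 : ac_distribution F2 f2).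

Lemma hazard_separated_of_increasing :
  hazard_increasing F1 f1 \/ hazard_increasing F2 f2 ->
  (forall x, 0 < x -> (hazard F1 f1 x <= hazard F2 f2 x)%E) ->
  forall z, F2 z < 1 -> hazard_separated F1 f1 F2 f2 z.
Proof.
move=> r_incr r12 z F2z_lt1.
have F2_lt1 u : u <= z -> F2 u < 1 by move/(ac_cdf_le HF2)/le_lt_trans; apply.
have F1_lt1 u : 0 < u -> u <= z -> F1 u < 1.
  by move=> u_gt0 /F2_lt1 F2u; move: (r12 u u_gt0); rewrite /hazard F2u; case: ltP.
have hazard_fin (F f : R -> R) u : F u < 1 -> hazard F f u = (f u / (1 - F u))%:E.
  by rewrite /hazard => ->.
case: r_incr => [r1_incr|r2_incr].
- exists (fun u => f1 u / (1 - F1 u)); split.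
  + move=> u u_gt0 uz; rewrite divr_ge0 ?(ac_density_ge0 HF1) // subr_ge0 ltW //.
    exact: F1_lt1.
  + move=> u v u_gt0 uv vz; rewrite -hazard_fin; last exact: F1_lt1 (lt_le_trans u_gt0 uv) vz.
    exact: r1_incr.
  + move=> u v u_gt0 uv uz; rewrite -hazard_fin; last exact: F1_lt1.
    exact: le_trans (r1_incr _ _ u_gt0 uv) (r12 _ (lt_le_trans u_gt0 uv)).
- exists (fun u => f2 u / (1 - F2 u)); split.
  + move=> u u_gt0 uz; rewrite divr_ge0 ?(ac_density_ge0 HF2) // subr_ge0 ltW //.
    exact: F2_lt1.
  + move=> u v u_gt0 uv vz; rewrite -hazard_fin; last exact: F2_lt1.
    exact: le_trans (r12 _ u_gt0) (r2_incr _ _ u_gt0 uv).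
  + move=> u v u_gt0 uv uz; rewrite -hazard_fin; last exact: F2_lt1.
    exact: r2_incr.
Qed.

Lemma survival_ratio_step {z w rho rho'} : 0 <= z -> z <= w -> 0 <= rho -> 0 <= rho' ->
  (forall u, z < u -> u <= w -> (hazard F1 f1 u <= rho'%:E)%E) ->
  (forall u, z < u -> u <= w -> (rho%:E <= hazard F2 f2 u)%E) ->
  (1 - F2 z) * expR (- (rho * (w - z))) <= 1 - F1 z ->
  (1 - F2 w) * expR (- (rho' * (w - z))) <= 1 - F1 w.
Proof.
move=> z_ge0 zw rho_ge0 rho'_ge0 r1_le r2_ge ratio_z.
apply: le_trans _ (survival_ge_of_hazard HF1 z_ge0 zw rho'_ge0 r1_le).
rewrite ler_wpM2r ?expR_ge0 //.
exact: le_trans (survival_le_of_hazard HF2 z_ge0 zw rho_ge0 r2_ge) ratio_z.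
Qed.

Lemma survival_le_of_separated y : 0 < y -> hazard_separated F1 f1 F2 f2 y ->
  1 - F2 y <= 1 - F1 y.
Proof.
move=> y_gt0 [h [h_ge0 r1_le r2_ge]]; apply: ler_of_mulexpR => e e_gt0.
pose n := (Num.truncn (y * h y / e)).+1.
have n_gt : y * h y / e < n%:R := truncnS_gt _.
have n_gt0 : 0 < n%:R :> R by rewrite ltr0n.
pose D := y / n%:R; pose x k := k%:R * D.
have D_gt0 : 0 < D by rewrite divr_gt0.
have x_ge0 k : 0 <= x k by rewrite mulr_ge0 // ltW.
have xn : x n = y by rewrite /x /D; field; rewrite gt_eqF.
have x_le k : (k <= n)%N -> x k <= y.
  by move=> kn; rewrite -xn; apply: ler_wpM2r; [exact: ltW | rewrite ler_nat].
have xS k : x k.+1 - x k = D by rewrite /x -natr1; ring.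
pose rho k := if k is 0 then 0 else h (x k).
have ratio k : (k <= n)%N -> (1 - F2 (x k)) * expR (- (rho k * D)) <= 1 - F1 (x k).
  elim: k => [|k IHk] kn.
    by rewrite /x /rho /= !mul0r (ac_cdf0 HF1) (ac_cdf0 HF2) oppr0 expR0 mulr1.
  have xk_le : x k <= x k.+1 by rewrite -subr_ge0 xS ltW.
  have xS_gt0 : 0 < x k.+1 by rewrite mulr_gt0 ?ltr0n.
  have := IHk (ltnW kn); rewrite -(xS k) => ratio_k.
  apply: (survival_ratio_step (x_ge0 k) xk_le _ _ _ _ ratio_k).
  - case: k {IHk xk_le xS_gt0 ratio_k} kn => // k kn.
    by apply: h_ge0; [rewrite mulr_gt0 ?ltr0n | apply/x_le/ltnW].
  - exact: h_ge0 xS_gt0 (x_le _ kn).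
  - by move=> u xu ux; apply: r1_le => //; [exact: le_lt_trans xu | exact: x_le].
  - move=> u xu _; case: k {IHk xk_le xS_gt0 ratio_k} kn xu => [_ _|k kn xu].
      exact: hazard_ge0.
    by apply: r2_ge; [rewrite mulr_gt0 ?ltr0n | exact: ltW | apply/x_le/ltnW].
have := ratio n (leqnn n); rewrite /rho /n /= -/n xn => ratio_y.
have hD_le : h y * D <= e.
  rewrite /D mulrA ler_pdivrMr // [h y * y]mulrC [e * _]mulrC.
  by move: n_gt; rewrite ltr_pdivrMr // => /ltW.
apply: le_trans (_ : expR (h y * D) * (1 - F1 y) <= _).
  have -> : 1 - F2 y = expR (h y * D) * ((1 - F2 y) * expR (- (h y * D))).
    by rewrite mulrCA -expRD subrr expR0 mulr1.
  by rewrite ler_wpM2l ?expR_ge0.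
by rewrite mulrC ler_wpM2l ?(ac_survival_ge0 HF1) // ler_expR.
Qed.

Lemma ln_survival_gap {nA nB lA mA mB lB x : R} : 0 <= nA -> 0 <= nB ->
  0 < lA -> lA <= mA -> mA <= mB -> mB <= lB -> 0 < x ->
  nA * mA + nB * mB <= nA * lA + nB * lB -> hazard_separated F1 f1 F2 f2 (mA * x) ->
  0 < 1 - F1 (lA * x) -> 0 < 1 - F2 (lB * x) ->
  nA * (ln (1 - F1 (lA * x)) - ln (1 - F1 (mA * x))) <=
  nB * (ln (1 - F2 (mB * x)) - ln (1 - F2 (lB * x))).
Proof.
move=> nA_ge0 nB_ge0 lA_gt0 lmA mmB mlB x_gt0 scale_sum [h [h_ge0 r1_le r2_ge]] G1_gt0 G2_gt0.
have mA_gt0 := lt_le_trans lA_gt0 lmA; have mB_gt0 := lt_le_trans mA_gt0 mmB.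
have c_gt0 : 0 < mA * x by rewrite mulr_gt0.
have rho_ge0 := h_ge0 _ c_gt0 (lexx _).
have lx_gt0 : 0 < lA * x by rewrite mulr_gt0.
have mBx_ge0 : 0 <= mB * x by rewrite ltW // mulr_gt0.
have lnA : ln (1 - F1 (lA * x)) - ln (1 - F1 (mA * x)) <= h (mA * x) * (mA * x - lA * x).
  have := survival_ge_of_hazard HF1 (ltW lx_gt0) (ler_wpM2r (ltW x_gt0) lmA) rho_ge0
    (fun u lu uc => r1_le u _ (lt_trans lx_gt0 lu) uc (lexx _)).
  move=> surv; have G1m_gt0 := lt_le_trans (mulr_gt0 G1_gt0 (expR_gt0 _)) surv.
  rewrite -ler_ln ?posrE ?mulr_gt0 ?expR_gt0 // in surv.
  by rewrite lnM ?posrE ?expR_gt0 // expRK in surv; lra.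
have lnB : h (mA * x) * (lB * x - mB * x) <= ln (1 - F2 (mB * x)) - ln (1 - F2 (lB * x)).
  have G2m_gt0 : 0 < 1 - F2 (mB * x).
    exact: lt_le_trans G2_gt0 (ac_survival_le HF2 (ler_wpM2r (ltW x_gt0) mlB)).
  have := survival_le_of_hazard HF2 mBx_ge0 (ler_wpM2r (ltW x_gt0) mlB) rho_ge0
    (fun u mu ul => r2_ge _ u c_gt0 (le_trans (ler_wpM2r (ltW x_gt0) mmB) (ltW mu)) (lexx _)).
  move=> surv; rewrite -ler_ln ?posrE ?mulr_gt0 ?expR_gt0 // in surv.
  by rewrite lnM ?posrE ?expR_gt0 // expRK in surv; lra.
have scaled : h (mA * x) * x * (nA * (mA - lA)) <= h (mA * x) * x * (nB * (lB - mB)).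
  by apply: ler_wpM2l; [apply: mulr_ge0 => //; exact: ltW | lra].
have := ler_wpM2l nA_ge0 lnA; have := ler_wpM2l nB_ge0 lnB; lra.
Qed.

End HazardComparison.

Section LogConvexGenerator.
Context {R : realType} {psi phi : R -> R}.
Hypotheses (psi_ni : nonincr_on `[0, +oo[ psi) (psi_phi : inverse_generator psi phi).

Lemma psi_le {x y} : 0 <= x -> x <= y -> psi y <= psi x.
Proof. by move=> x_ge0 xy; apply: psi_ni; rewrite //= in_itv /= andbT // (le_trans x_ge0). Qed.

Lemma phi_ge0 {u} : 0 < u -> u <= 1 -> 0 <= phi u.
Proof. by move=> u_gt0 u_le1; case: (psi_phi u); rewrite ?u_gt0. Qed.

Lemma phiK {u} : 0 < u -> u <= 1 -> psi (phi u) = u.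
Proof. by move=> u_gt0 u_le1; case: (psi_phi u); rewrite ?u_gt0. Qed.

Lemma phi_le {u v} : 0 < u -> u <= v -> v <= 1 -> phi v <= phi u.
Proof.
move=> u_gt0 uv v_le1; have v_gt0 := lt_le_trans u_gt0 uv; have u_le1 := le_trans uv v_le1.
rewrite leNgt; apply/negP => phi_uv.
have := psi_le (phi_ge0 u_gt0 u_le1) (ltW phi_uv); rewrite !phiK // => vu.
have uv_eq : u = v by apply/le_anti; rewrite uv vu.
by move: phi_uv; rewrite uv_eq ltxx.
Qed.

Hypothesis psi_lc : log_convex psi.

Lemma ln_psi_convex {u v w} : 0 <= u -> u < v -> v < w -> 0 < psi w ->
  (w - u) * ln (psi v) <= (w - v) * ln (psi u) + (v - u) * ln (psi w).
Proof.
move=> u_ge0 uv vw psiw_gt0.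
have wu_gt0 : 0 < w - u by rewrite subr_gt0 (lt_trans uv).
have v_ge0 : 0 <= v by rewrite (le_trans u_ge0) ?ltW.
have psiv_gt0 : 0 < psi v := lt_le_trans psiw_gt0 (psi_le v_ge0 (ltW vw)).
have psiu_gt0 : 0 < psi u by apply: lt_le_trans psiv_gt0 (psi_le u_ge0 (ltW uv)).
pose th := (w - v) / (w - u).
have th01 : 0 <= th <= 1.
  apply/andP; split; first by apply: divr_ge0; lra.
  by rewrite /th ler_pdivrMr // mul1r; lra.
have := psi_lc u w th u_ge0 (le_trans u_ge0 (ltW (lt_trans uv vw))) th01.
have -> : th * u + (1 - th) * w = v by rewrite /th; field; rewrite gt_eqF.
rewrite -ler_ln ?posrE ?mulr_gt0 ?powR_gt0 // lnM ?posrE ?powR_gt0 // !ln_powR.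
move=> ln_le; have -> : (w - v) * ln (psi u) + (v - u) * ln (psi w) =
    (w - u) * (th * ln (psi u) + (1 - th) * ln (psi w)) by rewrite /th; field; rewrite gt_eqF.
by apply: ler_wpM2l => //; exact: ltW.
Qed.

Lemma ln_psi_slope_le {s1 t1 s2 t2} :
  0 <= s1 -> s1 < t1 -> t1 <= s2 -> s2 < t2 -> 0 < psi t2 ->
  (ln (psi t1) - ln (psi s1)) * (t2 - s2) <= (ln (psi t2) - ln (psi s2)) * (t1 - s1).
Proof.
move=> s1_ge0 st1 ts2 st2 psi_gt0.
have cross (a b c d : R) : 0 < b -> 0 < d -> (a / b <= c / d) = (a * d <= c * b).
  by move=> b_gt0 d_gt0; rewrite ler_pdivrMr // mulrAC ler_pdivlMr.
have t1t2 := le_lt_trans ts2 st2.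
rewrite -cross ?subr_gt0 //.
apply: (@le_trans _ _ ((ln (psi t2) - ln (psi t1)) / (t2 - t1))).
  by rewrite cross ?subr_gt0 //; have := ln_psi_convex s1_ge0 st1 t1t2 psi_gt0; lra.
move: ts2; rewrite le_eqVlt => /predU1P[<-//|ts2].
rewrite cross ?subr_gt0 //.
by have := ln_psi_convex (le_trans s1_ge0 (ltW st1)) ts2 st2 psi_gt0; lra.
Qed.

Lemma phiB_le_of_lnB_le a b u u' v v' : 0 <= a -> 0 <= b ->
  0 < v' -> v' <= v -> v <= u -> u <= u' -> u' <= 1 ->
  a * (ln u' - ln u) <= b * (ln v - ln v') ->
  a * (phi u - phi u') <= b * (phi v' - phi v).
Proof.
move=> a_ge0 b_ge0 v'_gt0 v'v vu uu' u'_le1 ln_le.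
have v_gt0 := lt_le_trans v'_gt0 v'v; have u_gt0 := lt_le_trans v_gt0 vu.
have u'_gt0 := lt_le_trans u_gt0 uu'; have u_le1 := le_trans uu' u'_le1.
have v_le1 := le_trans vu u_le1; have v'_le1 := le_trans v'v v_le1.
have dB_ge0 : 0 <= phi v' - phi v by rewrite subr_ge0 phi_le.
have [->|a_neq0] := eqVneq a 0; first by rewrite mul0r mulr_ge0.
have a_gt0 : 0 < a by rewrite lt0r a_neq0.
have [dA_le0|dA_gt0] := leP (phi u - phi u') 0.
  by apply: le_trans _ (mulr_ge0 b_ge0 dB_ge0); exact: mulr_ge0_le0.
have uu'_lt : u < u'.
  by rewrite lt_neqAle uu' andbT; apply: contraTneq dA_gt0 => ->; rewrite subrr ltxx.
have lnA_gt0 : 0 < ln u' - ln u by rewrite subr_gt0 ltr_ln ?posrE.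
have lnB_gt0 : 0 < ln v - ln v'.
  have := lt_le_trans (mulr_gt0 a_gt0 lnA_gt0) ln_le.
  by apply: contraTlt => lnB_le0; rewrite -leNgt mulr_ge0_le0.
have phi_vv' : phi v < phi v'.
  rewrite lt_neqAle phi_le // andbT; apply: contraTneq lnB_gt0 => phi_eq.
  by rewrite -(phiK v_gt0 v_le1) phi_eq phiK // subrr ltxx.
have := ln_psi_slope_le (phi_ge0 u'_gt0 u'_le1) _ (phi_le v_gt0 vu u_le1) phi_vv'.
rewrite -subr_gt0 !phiK // => /(_ dA_gt0 v'_gt0) slope.
nra.
Qed.

End LogConvexGenerator.

(* When a marginal survival function vanishes, [phi 0 = +oo] and the value is [psi (+oo) = 0]. *)
Definition min_survival {R : realType} (psi phi FA FB : R -> R) (nA nB : nat) (a b x : R) : R :=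
  if (0 < 1 - FA (a * x)) && (0 < 1 - FB (b * x))
  then psi (nA%:R * phi (1 - FA (a * x)) + nB%:R * phi (1 - FB (b * x))) else 0.

Lemma min_survivalC {R : realType} (psi phi FA FB : R -> R) nA nB a b x :
  min_survival psi phi FA FB nA nB a b x = min_survival psi phi FB FA nB nA b a x.
Proof. by rewrite /min_survival andbC; case: ifP => // _; rewrite addrC. Qed.

Section MinimumSurvivalComparison.
Context {R : realType} {psi phi FA fA FB fB : R -> R}.
Hypotheses (psi_ni : nonincr_on `[0, +oo[ psi) (psi_range : forall x, 0 <= x -> 0 <= psi x <= 1).
Hypotheses (psi_phi : inverse_generator psi phi) (psi_lc : log_convex psi).
Hypotheses (HFA : ac_distribution FA fA) (HFB : ac_distribution FB fB).
Local Notation S := (min_survival psi phi FA FB).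

Lemma phi_lincomb_ge0 (nA nB : nat) {u v} : 0 < u -> u <= 1 -> 0 < v -> v <= 1 ->
  0 <= nA%:R * phi u + nB%:R * phi v.
Proof.
by move=> u_gt0 u_le1 v_gt0 v_le1; rewrite addr_ge0 // mulr_ge0 // (phi_ge0 psi_phi).
Qed.

Lemma min_survival_ge0 nA nB a b x : 0 <= S nA nB a b x.
Proof.
rewrite /min_survival; case: ifP => // /andP[GA_gt0 GB_gt0].
by case/andP: (psi_range _ (phi_lincomb_ge0 nA nB GA_gt0 (ac_survival_le1 HFA _)
                                               GB_gt0 (ac_survival_le1 HFB _))).
Qed.

Lemma min_survival_le_scale nA nB lA lB mA mB x : 0 <= x -> mA <= lA -> mB <= lB ->
  S nA nB lA lB x <= S nA nB mA mB x.
Proof.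
move=> x_ge0 mlA mlB; rewrite {1}/min_survival.
case: ifPn => [/andP[GA'_gt0 GB'_gt0]|_]; last exact: min_survival_ge0.
have GA_le := ac_survival_le HFA (ler_wpM2r x_ge0 mlA).
have GB_le := ac_survival_le HFB (ler_wpM2r x_ge0 mlB).
have GA_gt0 := lt_le_trans GA'_gt0 GA_le; have GB_gt0 := lt_le_trans GB'_gt0 GB_le.
have GA_le1 := ac_survival_le1 HFA (mA * x); have GB_le1 := ac_survival_le1 HFB (mB * x).
rewrite /min_survival GA_gt0 GB_gt0 /=.
apply: (psi_le psi_ni); first exact: phi_lincomb_ge0.
by apply: lerD; apply: ler_wpM2l => //; exact: (phi_le psi_ni psi_phi).
Qed.

Lemma min_survival_le {nA nB lA lB mA mB x} :
  hazard_increasing FA fA \/ hazard_increasing FB fB ->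
  (forall y, 0 < y -> (hazard FA fA y <= hazard FB fB y)%E) ->
  0 < lA -> mA <= mB -> mB <= lB ->
  nA%:R * mA + nB%:R * mB <= nA%:R * lA + nB%:R * lB -> 0 < x ->
  S nA nB lA lB x <= S nA nB mA mB x.
Proof.
move=> r_incr r_le lA_gt0 mmB mlB scale_sum x_gt0.
have [mlA|lmA] := leP mA lA; first exact: min_survival_le_scale (ltW x_gt0) mlA mlB.
rewrite {1}/min_survival; case: ifPn => [/andP[GA'_gt0 GB'_gt0]|_]; last exact: min_survival_ge0.
have mA_gt0 := lt_trans lA_gt0 lmA; have mAx_gt0 : 0 < mA * x by rewrite mulr_gt0.
have scale_le : {homo *%R^~ x : a b / a <= b} := ler_wpM2r (ltW x_gt0).
have GB'_le := ac_survival_le HFB (scale_le _ _ mlB).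
have GB_le := ac_survival_le HFB (scale_le _ _ mmB).
have GB_gt0 := lt_le_trans GB'_gt0 GB'_le.
have sep : hazard_separated FA fA FB fB (mA * x).
  apply: hazard_separated_of_increasing HFA HFB r_incr r_le _ _.
  by rewrite -subr_gt0; exact: lt_le_trans GB_gt0 GB_le.
have GBA : 1 - FB (mB * x) <= 1 - FA (mA * x).
  exact: le_trans GB_le (survival_le_of_separated HFA HFB _ mAx_gt0 sep).
have GA_gt0 := lt_le_trans GB_gt0 GBA.
rewrite /min_survival GA_gt0 GB_gt0 /=.
apply: (psi_le psi_ni).
  by apply: phi_lincomb_ge0; rewrite ?(ac_survival_le1 HFA) ?(ac_survival_le1 HFB).
suff : nA%:R * (phi (1 - FA (mA * x)) - phi (1 - FA (lA * x))) <=
       nB%:R * (phi (1 - FB (lB * x)) - phi (1 - FB (mB * x))) by lra.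
apply: (phiB_le_of_lnB_le psi_ni psi_phi psi_lc) => //.
- by apply: (ac_survival_le HFA); exact: scale_le (ltW lmA).
- exact: (ac_survival_le1 HFA).
- by apply: (ln_survival_gap HFA HFB) => //; exact: ltW.
Qed.

End MinimumSurvivalComparison.

Section WeakSupermajorization.
Context {R : realType}.

Lemma weakly_supmajorizes_sum {a b : seq R} : weakly_supmajorizes a b -> (0 < size a)%N ->
  \sum_(y <- b) y <= \sum_(y <- a) y.
Proof.
move=> [size_ab maj] a_gt0.
rewrite -(perm_big _ (permEl (perm_sort <=%R a))) -(perm_big _ (permEl (perm_sort <=%R b))).
rewrite [in X in X <= _](big_nth 0) [in X in _ <= X](big_nth 0) !size_sort -size_ab.
exact: maj.
Qed.

Lemma weakly_supmajorizes_ub {a b : seq R} {c : R} : weakly_supmajorizes a b -> (0 < size a)%N ->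
  {in a, forall y, y <= c} -> {in b, forall y, y <= c}.
Proof.
move=> [size_ab maj] a_gt0 a_le y yb; set N := (size a).-1.
have sizeE : size a = N.+1 by rewrite prednK.
have top_le : nth 0 (sort <=%R b) N <= nth 0 (sort <=%R a) N.
  by have := maj N; rewrite sizeE ltnSn !big_nat1; apply.
have top_a : nth 0 (sort <=%R a) N <= c.
  by apply: a_le; rewrite -(mem_sort <=%R) mem_nth // size_sort sizeE.
have /(nthP 0)[j jb <-] : y \in sort <=%R b by rewrite mem_sort.
apply: le_trans top_a; apply: le_trans top_le.
have jN : (j <= N)%N by move: jb; rewrite size_sort -size_ab sizeE ltnS.
by apply: (le_sorted_leq_nth 0 (sort_sorted le_total b)); rewrite ?inE ?size_sort -?size_ab ?sizeE.
Qed.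

Lemma weakly_supmajorizes_nseq2 {n1 n2 : nat} {l1 l2 m1 m2 : R} :
  (0 < n1)%N -> (0 < n2)%N ->
  weakly_supmajorizes (nseq n1 l1 ++ nseq n2 l2) (nseq n1 m1 ++ nseq n2 m2) ->
  n1%:R * m1 + n2%:R * m2 <= n1%:R * l1 + n2%:R * l2 /\ Num.max m1 m2 <= Num.max l1 l2.
Proof.
move=> n1_gt0 n2_gt0 maj.
have size_gt0 : (0 < size (nseq n1 l1 ++ nseq n2 l2))%N by rewrite size_cat size_nseq ltn_addr.
have sum_nseq n (c : R) : \sum_(y <- nseq n c) y = n%:R * c.
  by rewrite big_nseq iter_addr addr0 mulr_natl.
split; first by have := weakly_supmajorizes_sum maj size_gt0; rewrite !big_cat /= !sum_nseq.
have l_le : {in nseq n1 l1 ++ nseq n2 l2, forall y, y <= Num.max l1 l2}.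
  by move=> y; rewrite mem_cat !mem_nseq => /orP[/andP[_ /eqP->]|/andP[_ /eqP->]];
    rewrite le_max lexx ?orbT.
have m_le := weakly_supmajorizes_ub maj size_gt0 l_le.
by rewrite ge_max !m_le // mem_cat !mem_nseq eqxx ?n1_gt0 ?n2_gt0 ?orbT.
Qed.

End WeakSupermajorization.

Section MinimumOfModel.
Context {R : realType} {d : measure_display} {T : measurableType d} {P : probability T R}.
Context {n1 n2 : nat} {psi phi F1 F2 : R -> R}.

Lemma lt_minrv n (Z : 'I_n -> T -> R) x t :
  (x%:E < minrv Z t)%E <-> (forall i, x < Z i t).
Proof.
split=> [x_lt i|x_lt]; first by rewrite -lte_fin (lt_le_trans x_lt) // /minrv bigmin_le.
by apply: lt_bigmin => [|i _]; rewrite ?ltey ?lte_fin.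
Qed.

Lemma Gbar_gt0 l1 l2 x : (0 < n1)%N -> (0 < n2)%N ->
  [forall i, 0 < Gbar n1 F1 F2 l1 l2 (n := n1 + n2) i x] =
  (0 < 1 - F1 (l1 * x)) && (0 < 1 - F2 (l2 * x)).
Proof.
move=> n1_gt0 n2_gt0; apply/forallP/andP => [G_gt0|[G1_gt0 G2_gt0] i].
  split; first by have := G_gt0 (Ordinal (ltn_addr n2 n1_gt0)); rewrite /Gbar /= n1_gt0.
  have n1_lt : (n1 < n1 + n2)%N by rewrite -[X in (X < _)%N]addn0 ltn_add2l.
  by have := G_gt0 (Ordinal n1_lt); rewrite /Gbar /= ltnn.
by rewrite /Gbar; case: ifP.
Qed.

Lemma sum_phi_Gbar l1 l2 x :
  \sum_(i < n1 + n2) phi (Gbar n1 F1 F2 l1 l2 i x) =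
  n1%:R * phi (1 - F1 (l1 * x)) + n2%:R * phi (1 - F2 (l2 * x)).
Proof.
rewrite big_split_ord /=.
rewrite (eq_bigr (fun=> phi (1 - F1 (l1 * x)))) => [|i _]; last by rewrite /Gbar /= ltn_ord.
rewrite [X in _ + X](eq_bigr (fun=> phi (1 - F2 (l2 * x)))) => [|i _].
  by rewrite !sumr_const !card_ord !mulr_natl.
by rewrite /Gbar /= ltnNge leq_addr.
Qed.

Lemma model_min_survival {Z : 'I_(n1 + n2) -> {RV P >-> R}} {l1 l2} x :
  (0 < n1)%N -> (0 < n2)%N -> model P n1 n2 Z psi phi F1 F2 l1 l2 ->
  P [set t | (x%:E < minrv (fun i => (Z i : T -> R)) t)%E] =
  (min_survival psi phi F1 F2 n1 n2 l1 l2 x)%:E.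
Proof.
move=> n1_gt0 n2_gt0 [_ _ copula].
have -> : [set t | (x%:E < minrv (fun i => (Z i : T -> R)) t)%E] =
          [set t | forall i, (fun=> x) i < Z i t].
  by apply/seteqP; split=> t /=; [move/lt_minrv | move=> ?; apply/lt_minrv].
by rewrite copula Gbar_gt0 // /min_survival; case: ifP => // _; rewrite sum_phi_Gbar.
Qed.

End MinimumOfModel.

Lemma st_le_minrv {R : realType} {d1 d2 : measure_display}
  {T1 : measurableType d1} {T2 : measurableType d2}
  {P1 : probability T1 R} {P2 : probability T2 R} {n1 n2 : nat}
  {X : 'I_(n1 + n2) -> {RV P1 >-> R}} {Y : 'I_(n1 + n2) -> {RV P2 >-> R}}
  {psi phi F1 f1 F2 f2 : R -> R} {l1 l2 m1 m2 : R} :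
  (0 < n1)%N -> (0 < n2)%N -> ac_distribution F1 f1 -> ac_distribution F2 f2 ->
  0 < l1 -> 0 < l2 -> 0 < m1 -> 0 < m2 ->
  model P1 n1 n2 X psi phi F1 F2 l1 l2 -> model P2 n1 n2 Y psi phi F1 F2 m1 m2 ->
  (forall x, 0 < x -> min_survival psi phi F1 F2 n1 n2 l1 l2 x <=
                      min_survival psi phi F1 F2 n1 n2 m1 m2 x) ->
  st_le P1 P2 (minrv (fun i => (X i : T1 -> R))) (minrv (fun i => (Y i : T2 -> R))).
Proof.
move=> n1_gt0 n2_gt0 HF1 HF2 l1_gt0 l2_gt0 m1_gt0 m2_gt0 HX HY S_le x.
rewrite (model_min_survival x n1_gt0 n2_gt0 HX) (model_min_survival x n1_gt0 n2_gt0 HY) lee_fin.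
have [x_le0|x_gt0] := leP x 0; last exact: S_le.
have F_nonpos (F f : R -> R) a : ac_distribution F f -> 0 < a -> F (a * x) = 0.
  by move=> HF a_gt0; apply: (ac_cdf_le0 HF); rewrite mulr_ge0_le0 // ltW.
by rewrite /min_survival !(F_nonpos F1 f1) ?(F_nonpos F2 f2).
Qed.

Theorem corollary3p5 (R : realType) (n1 n2 : nat)
  (psi phi F1 F2 f1 f2 : R -> R) (l1 l2 m1 m2 : R)
  (d1 : measure_display) (T1 : measurableType d1) (P1 : probability T1 R)
  (X : 'I_(n1 + n2) -> {RV P1 >-> R})
  (d2 : measure_display) (T2 : measurableType d2) (P2 : probability T2 R)
  (Y : 'I_(n1 + n2) -> {RV P2 >-> R}) :
  (1 <= n1)%N -> (1 <= n2)%N ->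
  archimedean_generator (n1 + n2) psi -> log_convex psi ->
  inverse_generator psi phi ->
  ac_distribution F1 f1 -> ac_distribution F2 f2 ->
  0 < l1 -> 0 < l2 -> 0 < m1 -> 0 < m2 ->
  model P1 n1 n2 X psi phi F1 F2 l1 l2 ->
  model P2 n1 n2 Y psi phi F1 F2 m1 m2 ->
  let lam := nseq n1 l1 ++ nseq n2 l2 in
  let mu := nseq n1 m1 ++ nseq n2 m2 in
  let Xmin := minrv (fun i => (X i : T1 -> R)) in
  let Ymin := minrv (fun i => (Y i : T2 -> R)) in
  let r1 := hazard F1 f1 in
  let r2 := hazard F2 f2 in
  (* part (ii), common to both cases *)
  let part_ii :=
    ((forall x, 0 < x -> r1 x = r2 x) -> hazard_increasing F1 f1 ->
     weakly_supmajorizes lam mu -> st_le P1 P2 Xmin Ymin) in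
  (* case (a) *)
  ((n1 <= n2)%N -> in_Eplus l1 l2 -> in_Eplus m1 m2 ->
     ((hazard_increasing F1 f1 \/ hazard_increasing F2 f2) ->
      (forall x, 0 < x -> (r1 x <= r2 x)%E) ->
      weakly_supmajorizes lam mu -> st_le P1 P2 Xmin Ymin) /\ part_ii) /\
  (* case (b) *)
  ((n2 <= n1)%N -> in_Dplus l1 l2 -> in_Dplus m1 m2 ->
     ((hazard_increasing F1 f1 \/ hazard_increasing F2 f2) ->
      (forall x, 0 < x -> (r2 x <= r1 x)%E) ->
      weakly_supmajorizes lam mu -> st_le P1 P2 Xmin Ymin) /\ part_ii).
Proof.
move=> n1_gt0 n2_gt0 [_ [psi_ni psi_range _ _ _]] psi_lc psi_phi HF1 HF2 l1_gt0 l2_gt0 m1_gt0 m2_gt0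
  HX HY lam mu Xmin Ymin r1 r2 part_ii.
have st_le_of := st_le_minrv n1_gt0 n2_gt0 HF1 HF2 l1_gt0 l2_gt0 m1_gt0 m2_gt0 HX HY.
have case_a : l1 <= l2 -> m1 <= m2 -> hazard_increasing F1 f1 \/ hazard_increasing F2 f2 ->
    (forall x, 0 < x -> (r1 x <= r2 x)%E) -> weakly_supmajorizes lam mu -> st_le P1 P2 Xmin Ymin.
  move=> l12 m12 r_incr r12 /(weakly_supmajorizes_nseq2 n1_gt0 n2_gt0) [scale_sum].
  rewrite (max_r l12) (max_r m12) => m2l2.
  apply: st_le_of => x x_gt0.
  by apply: (min_survival_le psi_ni psi_range psi_phi psi_lc HF1 HF2 r_incr r12).
have case_b : l2 <= l1 -> m2 <= m1 -> hazard_increasing F1 f1 \/ hazard_increasing F2 f2 ->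
    (forall x, 0 < x -> (r2 x <= r1 x)%E) -> weakly_supmajorizes lam mu -> st_le P1 P2 Xmin Ymin.
  move=> l21 m21 /or_comm r_incr r21 /(weakly_supmajorizes_nseq2 n1_gt0 n2_gt0) [scale_sum].
  rewrite (max_l l21) (max_l m21) => m1l1.
  apply: st_le_of => x x_gt0; rewrite !(min_survivalC psi phi F1 F2).
  apply: (min_survival_le psi_ni psi_range psi_phi psi_lc HF2 HF1 r_incr r21) => //.
  by rewrite addrC [leRHS]addrC.
split=> [_ /andP[_ l12] /andP[_ m12]|_ /andP[_ l21] /andP[_ m21]]; split.
- exact: case_a.
- by move=> r_eq /(@or_introl _ (hazard_increasing F2 f2))/case_a; apply=> // x /r_eq ->.
- exact: case_b.
- by move=> r_eq /(@or_introl _ (hazard_increasing F2 f2))/case_b; apply=> // x /r_eq ->.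
Qed.
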